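(* Let $\gamma,\lambda\in\mathbb{C}$ and let $u,v:\mathbb{Z}^2\to\mathbb{C}$ satisfy, for all $(l,m)\in\mathbb{Z}^2$ (with all denominators nonzero), \[ \frac{\widetilde{\overline u}}{u}=\frac{(\gamma\widetilde u-1)(\gamma-\overline u)}{(\gamma-\widetilde u)(\gamma\overline u-1)},\qquad (1-\gamma\overline u)(\lambda+\gamma\widetilde v)-(\gamma-\overline u)(\gamma-\widetilde{\overline v})u\widetilde v=0, \] \[ (\lambda+\gamma\widetilde v-u\widetilde v)(1-\gamma u+uv)+(1-\gamma^2-\lambda)uv=0,\qquad (1-\gamma u)(\lambda+\gamma v)-(\gamma-u)(\gamma-\overline v)\overline u v=0. \] Then $v$ satisfies, for all $(l,m)$, \[ \begin{aligned} &\gamma^2\big(v-\widetilde{\overline v}\big)\big(\overline v-\widetilde v\big)\big(\lambda+v\overline v\big)\big(\lambda+\widetilde v\widetilde{\overline v}\big)-(1-\gamma^2)(\gamma^2-\lambda)\big(v\overline v-\widetilde v\widetilde{\overline v}\big)^2\\ &\quad+\gamma(1-\gamma^2)\big(v\overline v-\widetilde v\widetilde{\overline v}\big)\Big(\big(\lambda+v\overline v\big)\big(\widetilde v+\widetilde{\overline v}\big)-\big(v+\overline v\big)\big(\lambda+\widetilde v\widetilde{\overline v}\big)\Big)=0. \end{aligned} \]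
   Context: Shift notation: for $f:\mathbb{Z}^2\to\mathbb{C}$, $f=f_{l,m}$, $\overline f=f_{l+1,m}$, $\widetilde f=f_{l,m+1}$, $\widetilde{\overline f}=f_{l+1,m+1}$. *)

From HB Require Import structures.
From mathcomp Require Import all_boot all_order all_algebra.
From mathcomp Require Import complex.
From mathcomp Require Import Rstruct.
Set Implicit Arguments. Unset Strict Implicit. Unset Printing Implicit Defensive.
Import Order.TTheory GRing.Theory Num.Theory.
Local Open Scope ring_scope.

Definition CC : numClosedFieldType := (Rdefinitions.R)[i].

From HB Require Import structures.
From mathcomp Require Import all_boot all_order all_algebra.
From mathcomp Require Import complex Rstruct.
From mathcomp Require Import ring.
Import Order.TTheory GRing.Theory Num.Theory.
Local Open Scope ring_scope.

(* The theorem is a purely local statement about one elementary square of the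
   lattice: with u0 = u, u1 = u-bar, v0 = v, v1 = v-bar, v2 = v-tilde and
   v12 = v-tilde-bar, the quad-equation for v follows from four of the given
   relations, namely E4 and E2 at (l, m) and E3 at (l, m) and (l + 1, m).  We therefore work over an arbitrary field.
   - Generically, E4 is solved for u1 and E3 (at both sites) for v2 and v12;
     substituting this parametrization makes the quad-equation a rational
     identity ([quad_v_parametrized]).
   - E4 and E3 together give the cross relation v0 w1 = v2 w0, where
     w = 1 - g u + u v is the factor occurring in E3 ([cross_relation]).
   - The degenerate cases v0 = 0, v1 = g, w0 = 0 and w1 = 0, in which the
     parametrization breaks down, are handled one by one; there E2 is needed. *)

Section QuadEquation.
Context {F : fieldType}.

Definition quad_v (g L v0 v1 v2 v12 : F) : F :=
  g ^+ 2 * (v0 - v12) * (v1 - v2) * (L + v0 * v1) * (L + v2 * v12)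
  - (1 - g ^+ 2) * (g ^+ 2 - L) * (v0 * v1 - v2 * v12) ^+ 2
  + g * (1 - g ^+ 2) * (v0 * v1 - v2 * v12)
    * ((L + v0 * v1) * (v2 + v12) - (v0 + v1) * (L + v2 * v12)).

(* Left-hand sides of the relations E2, E3 and E4 of the theorem, written for
   one square: [rel_E2 g L u0 u1 v2 v12], [rel_E3 g L u v v'] with v' the
   m-shift of v, and [rel_E4 g L u0 u1 v0 v1]. *)
Definition rel_E2 (g L u0 u1 v2 v12 : F) : F :=
  (1 - g * u1) * (L + g * v2) - (g - u1) * (g - v12) * u0 * v2.

Definition rel_E3 (g L u v v' : F) : F :=
  (L + g * v' - u * v') * (1 - g * u + u * v) + (1 - g ^+ 2 - L) * u * v.

Definition rel_E4 (g L u0 u1 v0 v1 : F) : F :=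
  (1 - g * u0) * (L + g * v0) - (g - u0) * (g - v1) * u1 * v0.

Definition wfac (g u v : F) : F := 1 - g * u + u * v.

(* The value of the m-shift of v forced by E3, when (g - u) w != 0. *)
Definition v_from_E3 (g L u v : F) : F :=
  - (L * wfac g u v + (1 - g ^+ 2 - L) * u * v) / ((g - u) * wfac g u v).

(* The value of the l-shift of u forced by E4, when (g - u0)(g - v1) v0 != 0. *)
Definition u_from_E4 (g L u0 v0 v1 : F) : F :=
  (1 - g * u0) * (L + g * v0) / ((g - u0) * (g - v1) * v0).

Lemma cancel_nonzero (c : F) {a b : F} : a != 0 -> a * b = c -> c = 0 -> b = 0.
Proof. by move=> nz_a <- /eqP; rewrite mulf_eq0 (negbTE nz_a) => /eqP. Qed.

Lemma solve_linear {x a b c : F} :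
  a != 0 -> x * a - b = c -> c = 0 -> x = b / a.
Proof.
move=> nz_a ec c0; apply: (canRL (mulfK nz_a)); apply/eqP.
by rewrite -subr_eq0 ec c0.
Qed.

Lemma quad_v_parametrized (g L u0 v0 v1 : F) :
  let u1 := u_from_E4 g L u0 v0 v1 in
  g - u0 != 0 -> g - u1 != 0 -> v0 != 0 -> g - v1 != 0 ->
  wfac g u0 v0 != 0 -> wfac g u1 v1 != 0 ->
  quad_v g L v0 v1 (v_from_E3 g L u0 v0) (v_from_E3 g L u1 v1) = 0.
Proof.
move=> u1; rewrite /u1 /v_from_E3 /wfac /u_from_E4.
move=> nz_gu0 nz_gu1 nz_v0 nz_gv1 nz_w0 nz_w1.
rewrite /quad_v; field; rewrite nz_v0 nz_gv1 nz_gu0 nz_w0 /=.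
(* The remaining denominators are w1 D and (g - u1) D, with D the
   denominator of u1. *)
set D := (g - u0) * (g - v1) * v0; set N := (1 - g * u0) * (L + g * v0).
have nz_D : D != 0 by rewrite !mulf_neq0.
have -> : D - g * N + N * v1 = (1 - g * (N / D) + N / D * v1) * D by field.
have -> : g * D - N = (g - N / D) * D by field.
by rewrite !mulf_neq0.
Qed.

Context {g L u0 u1 v0 v1 v2 v12 : F}.
Hypotheses (nz_u0 : u0 != 0) (nz_u1 : u1 != 0).
Hypotheses (nz_gu0 : g - u0 != 0) (nz_gu1 : g - u1 != 0).
Hypotheses (nz_1gu0 : 1 - g * u0 != 0) (nz_1gu1 : 1 - g * u1 != 0).
Hypothesis E2 : rel_E2 g L u0 u1 v2 v12 = 0.
Hypothesis E30 : rel_E3 g L u0 v0 v2 = 0.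
Hypothesis E31 : rel_E3 g L u1 v1 v12 = 0.
Hypothesis E4 : rel_E4 g L u0 u1 v0 v1 = 0.

Local Notation w0 := (wfac g u0 v0).
Local Notation w1 := (wfac g u1 v1).
Local Notation Q := (quad_v g L v0 v1 v2 v12).

(* E4 - E3 factors as (g - u0) (v0 w1 - v2 w0). *)
Lemma cross_relation : v0 * w1 = v2 * w0.
Proof.
apply/eqP; rewrite -subr_eq0; apply/eqP.
apply: (cancel_nonzero (rel_E4 g L u0 u1 v0 v1 - rel_E3 g L u0 v0 v2) nz_gu0).
  by rewrite /rel_E4 /rel_E3 /wfac; ring.
by rewrite E4 E30 subrr.
Qed.

(* If v0 = 0 then E4 forces L = 0 and E3 forces v2 = 0. *)
Lemma quad_v_v0_zero : v0 = 0 -> Q = 0.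
Proof.
move=> v0_0.
have L0 : L = 0.
  by apply: (cancel_nonzero _ nz_1gu0 _ E4); rewrite /rel_E4 v0_0; ring.
have v2_0 : v2 = 0.
  apply: (cancel_nonzero _ (mulf_neq0 nz_gu0 nz_1gu0) _ E30).
  by rewrite /rel_E3 v0_0 L0; ring.
by rewrite /quad_v v0_0 v2_0 L0; ring.
Qed.

(* If v1 = g then E4 forces L = - g v0, which makes Q vanish identically. *)
Lemma quad_v_v1_gamma : v1 = g -> Q = 0.
Proof.
move=> v1_g.
have eL : L + g * v0 = 0.
  by apply: (cancel_nonzero _ nz_1gu0 _ E4); rewrite /rel_E4 v1_g; ring.
have -> : L = - (g * v0) by apply/eqP; rewrite -addr_eq0 eL.
by rewrite /quad_v v1_g; ring.
Qed.

(* If w0 = 0 (with v0 != 0) then L = 1 - g^2, w1 = 0, v0 and v1 are fixed by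
   u0 and u1, and E2 determines v2 unless its coefficient D vanishes, in
   which case L = 0, g^2 = 1 and v12 = v0. *)
Lemma quad_v_w0_zero : v0 != 0 -> w0 = 0 -> Q = 0.
Proof.
move=> nz_v0 w0_0.
have eL : 1 - g ^+ 2 - L = 0.
  apply: (cancel_nonzero (rel_E3 g L u0 v0 v2 - (L + g * v2 - u0 * v2) * w0)
                         (mulf_neq0 nz_u0 nz_v0)).
    by rewrite /rel_E3 /wfac; ring.
  by rewrite E30 w0_0 mulr0 subrr.
have w1_0 : w1 = 0.
  by apply: (cancel_nonzero _ nz_v0 cross_relation); rewrite w0_0 mulr0.
have ev0 : v0 = (g * u0 - 1) / u0.
  by apply: (solve_linear nz_u0 _ w0_0); rewrite /wfac; ring.
have ev1 : v1 = (g * u1 - 1) / u1.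
  by apply: (solve_linear nz_u1 _ w1_0); rewrite /wfac; ring.
have {}eL : L = 1 - g ^+ 2 by apply/eqP; rewrite eq_sym -subr_eq0 eL.
set D := (1 - g * u1) * g - (g - u1) * (g - v12) * u0.
have [D0 | nz_D] := eqVneq D 0.
  have L0 : L = 0.
    apply: (cancel_nonzero (rel_E2 g L u0 u1 v2 v12 - v2 * D) nz_1gu1).
      by rewrite /rel_E2 /D; ring.
    by rewrite E2 D0 mulr0 subrr.
  have g2 : g ^+ 2 = 1 by apply/eqP; rewrite eq_sym -subr_eq0 -eL L0.
  have ev12 : v12 - v0 = 0.
    apply: (cancel_nonzero (D - (g - u1) * w0 - u1 * (1 - g ^+ 2))
                           (mulf_neq0 nz_gu1 nz_u0)).
      by rewrite /D /wfac; ring.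
    by rewrite D0 w0_0 g2 subrr !mulr0 !subr0.
  have -> : v12 = v0 by apply/eqP; rewrite -subr_eq0 ev12.
  by rewrite /quad_v L0 g2; ring.
have -> : v2 = - ((1 - g * u1) * L) / D.
  by apply: (solve_linear nz_D _ E2); rewrite /rel_E2 /D; ring.
rewrite /quad_v eL ev0 ev1 /D; field.
by rewrite nz_D nz_u0 nz_u1.
Qed.

(* If w1 = 0 but w0 != 0 then v2 = 0, and E3 at both sites gives
   L = 1 - g^2 and L = 0, so that g^2 = 1. *)
Lemma quad_v_w1_zero : w0 != 0 -> w1 = 0 -> Q = 0.
Proof.
move=> nz_w0 w1_0.
have v2_0 : v2 = 0.
  apply: (cancel_nonzero (v0 * w1) nz_w0); last by rewrite w1_0 mulr0.
  by rewrite cross_relation mulrC.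
have nz_v1 : v1 != 0.
  apply: contra_neq nz_1gu1 => v1_0.
  by move: w1_0; rewrite /wfac v1_0 mulr0 addr0.
have eL : 1 - g ^+ 2 - L = 0.
  apply: (cancel_nonzero (rel_E3 g L u1 v1 v12 - (L + g * v12 - u1 * v12) * w1)
                         (mulf_neq0 nz_u1 nz_v1)).
    by rewrite /rel_E3 /wfac; ring.
  by rewrite E31 w1_0 mulr0 subrr.
have L0 : L = 0.
  apply: (cancel_nonzero (rel_E3 g L u0 v0 v2 - u0 * v0 * (1 - g ^+ 2 - L))
                         nz_w0).
    by rewrite /rel_E3 /wfac v2_0; ring.
  by rewrite E30 eL mulr0 subrr.
have g2 : g ^+ 2 = 1 by apply/eqP; rewrite eq_sym -subr_eq0 -eL L0 subr0.
by rewrite /quad_v v2_0 L0 g2; ring.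
Qed.

Lemma quad_v_holds : Q = 0.
Proof.
have [v0_0 | nz_v0] := eqVneq v0 0; first exact: quad_v_v0_zero.
have [v1_g | nz_v1g] := eqVneq v1 g; first exact: quad_v_v1_gamma.
have [w0_0 | nz_w0] := eqVneq w0 0; first exact: quad_v_w0_zero.
have [w1_0 | nz_w1] := eqVneq w1 0; first exact: quad_v_w1_zero.
have nz_gv1 : g - v1 != 0 by rewrite subr_eq0 eq_sym.
have eu1 : u1 = u_from_E4 g L u0 v0 v1.
  rewrite /u_from_E4; apply: (solve_linear (c := - rel_E4 g L u0 u1 v0 v1)).
  - by rewrite !mulf_neq0.
  - by rewrite /rel_E4; ring.
  - by rewrite E4 oppr0.
have ev2 : v2 = v_from_E3 g L u0 v0.
  rewrite /v_from_E3; apply: (solve_linear _ _ E30).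
    by rewrite !mulf_neq0.
  by rewrite /rel_E3 /wfac; ring.
have ev12 : v12 = v_from_E3 g L u1 v1.
  rewrite /v_from_E3; apply: (solve_linear _ _ E31).
    by rewrite !mulf_neq0.
  by rewrite /rel_E3 /wfac; ring.
rewrite ev2 ev12 eu1; apply: quad_v_parametrized => //; by rewrite -eu1.
Qed.

End QuadEquation.

Theorem mainTheorem11 (gamma lambda : CC) (u v : int -> int -> CC)
  (* denominators nonzero *)
  (Hu0 : forall l m, u l m != 0)
  (Hd1 : forall l m, gamma - u l (m + 1) != 0)
  (Hd2 : forall l m, gamma * u (l + 1) m - 1 != 0)
  (E1 : forall l m,
     u (l + 1) (m + 1) / u l m =
     ((gamma * u l (m + 1) - 1) * (gamma - u (l + 1) m)) /
     ((gamma - u l (m + 1)) * (gamma * u (l + 1) m - 1)))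
  (E2 : forall l m,
     (1 - gamma * u (l + 1) m) * (lambda + gamma * v l (m + 1))
     - (gamma - u (l + 1) m) * (gamma - v (l + 1) (m + 1)) * u l m * v l (m + 1) = 0)
  (E3 : forall l m,
     (lambda + gamma * v l (m + 1) - u l m * v l (m + 1)) * (1 - gamma * u l m + u l m * v l m)
     + (1 - gamma ^+ 2 - lambda) * u l m * v l m = 0)
  (E4 : forall l m,
     (1 - gamma * u l m) * (lambda + gamma * v l m)
     - (gamma - u l m) * (gamma - v (l + 1) m) * u (l + 1) m * v l m = 0) :
  forall l m,
    let v0 := v l m in
    let v1 := v (l + 1) m in
    let v2 := v l (m + 1) in
    let v12 := v (l + 1) (m + 1) in
    gamma ^+ 2 * (v0 - v12) * (v1 - v2) * (lambda + v0 * v1) * (lambda + v2 * v12)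
    - (1 - gamma ^+ 2) * (gamma ^+ 2 - lambda) * (v0 * v1 - v2 * v12) ^+ 2
    + gamma * (1 - gamma ^+ 2) * (v0 * v1 - v2 * v12)
      * ((lambda + v0 * v1) * (v2 + v12) - (v0 + v1) * (lambda + v2 * v12)) = 0.
Proof.
move=> l m v0 v1 v2 v12.
have nz_gu k : gamma - u k m != 0.
  by have := Hd1 k (m - 1); rewrite subrK.
have nz_1gu k : 1 - gamma * u k m != 0.
  by have := Hd2 (k - 1) m; rewrite subrK -oppr_eq0 opprB.
exact: (@quad_v_holds _ gamma lambda (u l m) (u (l + 1) m) v0 v1 v2 v12
  (Hu0 l m) (Hu0 (l + 1) m) (nz_gu l) (nz_gu (l + 1))
  (nz_1gu l) (nz_1gu (l + 1)) (E2 l m) (E3 l m) (E3 (l + 1) m) (E4 l m)).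
Qed.
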